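(* For every $n\ge1$ and $i,j\in S$, $(E^n)_{ij}$ equals the probability that the BPME started with population $n$ in environment $i$ halts in $0.j$. Moreover $f(E)=E$, and for every $S\times S$ matrix $M$ with $0\le M\le E$ entrywise, $\lim_{n\to\infty}f^n(M)=E$, where $f^n$ is the $n$-th iterate of $f$ (in particular $\lim_{n\to\infty}f^n(O)=E$ for the zero matrix $O$).
   Context: Let $S$ be a finite set and $P$ the transition matrix of an irreducible Markov chain on $S$. For each $j\in S$ let $(R_{jn})_{n\in\mathbb{N}}$ be a probability distribution on $\mathbb{N}$. Let $(\xi_t^i)_{t\ge1,i\in S}$ be independent with $\mathbb{P}(\xi_t^i=n)=R_{in}$, let $(Q_t)_{t\ge0}$ be a Markov chain with transition matrix $P$ independent of the $\xi$'s, and $\xi_t=\sum_{i}\xi_t^i\mathbf{1}\{Q_t=i\}$. The BPME is $X_{t+1}=X_t-1+\xi_{t+1}$ if $X_t>0$ and $X_{t+1}=0$ if $X_t=0$, with $X_0\ge1$. The process started from $X_0=n$, $Q_0=i$ halts in $0.j$ if $T:=\inf\{t:X_t=0\}$ is finite and $Q_T=j$. The extinction matrix $E$ is the $S\times S$ matrix with $E_{ij}$ the probability that the BPME started from $X_0=1$, $Q_0=i$ halts in $0.j$. For $n\in\mathbb{N}$ let $(P_n)_{ij}=P_{ij}R_{jn}$, and define the matrix generating function $f(M)=\sum_{n\ge0}P_nM^n$ for substochastic $S\times S$ matrices $M$, with $M^0=I$. *)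

From mathcomp Require Import all_boot all_order all_algebra.
From mathcomp Require Import all_classical all_reals all_analysis.
Set Implicit Arguments. Unset Strict Implicit. Unset Printing Implicit Defensive.
Import Order.TTheory GRing.Theory Num.Theory.
Import numFieldNormedType.Exports.
Local Open Scope ring_scope.

Section BPME.
Variables (R : realType) (s : nat).

Definition rseries (u : nat -> R) : R := limn (series u).

(* The environment state space S is 'I_s; P is the transition matrix of the
   environment chain, Rd j is the offspring distribution in environment j. *)
Variables (P : 'M[R]_s) (Rd : 'I_s -> nat -> R).

(* haltT t n i j = probability that the BPME started from X_0 = n, Q_0 = i
   has T = t (first hitting time of 0) and Q_T = j.  First-step decomposition:
   from X_t = n'+1 > 0, Q_{t+1} = k w.p. P i k, then xi_{t+1} = m w.p. Rd k m,
   and X_{t+1} = n' + m. *)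
Fixpoint haltT (t : nat) : nat -> 'I_s -> 'I_s -> R :=
  match t with
  | 0 => fun n i j => ((n == 0)%N && (i == j))%:R
  | t'.+1 => fun n i j =>
      match n with
      | 0 => 0
      | n'.+1 => \sum_(k < s) P i k * rseries (fun m => Rd k m * haltT t' (n' + m) k j)
      end
  end.

Definition haltProb (n : nat) (i j : 'I_s) : R := rseries (fun t => haltT t n i j).

Definition extMx : 'M[R]_s := \matrix_(i, j) haltProb 1 i j.

Definition Pn (n : nat) : 'M[R]_s := \matrix_(i, j) (P i j * Rd j n).

Definition fgen (M : 'M[R]_s) : 'M[R]_s :=
  \matrix_(i, j) rseries (fun n => (Pn n *m M ^+ n) i j).

End BPME.

(* Let h t n be the matrix of probabilities of halting at time t in 0.j from population n
   in environment i (haltT), and H n = sum_t h t n (haltProb).  Above 0 the population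
   performs a walk that does not depend on its level, so from a + b it first has to come
   down to b, which takes exactly the time of halting from a: h t (a + b) is the convolution
   in t of h a and h b, and summing over t gives H (a + b) = H a * H b, i.e. E ^+ n = H n.
   Conditioning on the first step then reads f E = E.
   For the limit, let G k (extMx_by k) be the probability of halting from population 1
   before time k.  The same convolution bounds the probability of halting from m before
   time k by G k ^+ m, so the first-step decomposition gives G (k + 1) <= f (G k).  As f is
   monotone on [0, E] and fixes E, G k <= f^k M <= E, and G k increases to E. *)
From mathcomp Require Import all_boot all_order all_algebra.
From mathcomp Require Import all_classical all_reals all_analysis.
Import Order.TTheory GRing.Theory Num.Theory.
Import numFieldNormedType.Exports.
Local Open Scope classical_set_scope.
Local Open Scope ring_scope.

Section real_series.
Variable R : realType.
Implicit Types (u : nat -> R) (c : R).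

(* [rseries u] is a junk value unless [series u] converges; identities between nonnegative
   series are proved in [\bar R], where summation commutes freely, through this bridge. *)
Lemma EFin_rseries u : cvgn (series u) -> (rseries u)%:E = (\sum_(n <oo) (u n)%:E)%E.
Proof.
by move=> cu; rewrite /rseries -EFin_lim //; apply/congr_lim/funext => n /=; rewrite sumEFin.
Qed.

Lemma rseries_ge0 u : cvgn (series u) -> (forall n, 0 <= u n) -> 0 <= rseries u.
Proof. by move=> cu u0; apply: limr_ge cu _; apply: nearW => n; exact: sumr_ge0. Qed.

Lemma rseriesZl u c : cvgn (series u) -> rseries (fun n => c * u n) = c * rseries u.
Proof. exact: lim_seriesZ. Qed.

Lemma is_cvg_series_sum (I : Type) (r : seq I) (F : I -> nat -> R) :
  (forall i, cvgn (series (F i))) -> cvgn (series (fun n => \sum_(i <- r) F i n)).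
Proof.
move=> cF; elim: r => [|a r IH].
  under eq_fun do rewrite big_nil; rewrite /series /=.
  by under eq_fun do rewrite big1 //; exact: is_cvg_cst.
under eq_fun do rewrite big_cons; exact: is_cvg_seriesD.
Qed.

Lemma rseries_sum (I : Type) (r : seq I) (F : I -> nat -> R) :
  (forall i, cvgn (series (F i))) ->
  rseries (fun n => \sum_(i <- r) F i n) = \sum_(i <- r) rseries (F i).
Proof.
move=> cF; elim: r => [|a r IH].
  under eq_fun do rewrite big_nil; rewrite big_nil /rseries /series /=.
  by under eq_fun do rewrite big1 //; exact: lim_cst.
under eq_fun do rewrite big_cons; rewrite big_cons -IH.
by rewrite /rseries -lim_seriesD //; exact: is_cvg_series_sum.
Qed.

Lemma rseries_single u : (forall n, u n.+1 = 0) -> rseries u = u 0%N.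
Proof.
move=> u0; apply: cvg_lim => //; rewrite -cvg_shiftS.
have -> : (fun n => series u n.+1) = fun=> u 0%N.
  by apply/funext => n; rewrite /series /= big_nat_recl // big1 ?addr0.
exact: cvg_cst.
Qed.

Lemma nneseries_shift (u : nat -> \bar R) : u 0%N = 0%E -> (forall n, 0 <= u n)%E ->
  (\sum_(n <oo) u n.+1 = \sum_(n <oo) u n)%E.
Proof.
move=> u0 u_ge0; rewrite [RHS](@nneseries_split R _ 0 1) // add0n big_nat1 u0 add0e.
by rewrite -(@nneseries_addn R u 1%N) //; apply: eq_eseriesr => n _; rewrite addn1.
Qed.

Section mixture.
Variables (p w : nat -> R).
Hypotheses (p_ge0 : forall m, 0 <= p m) (p_sum1 : series p @ \oo --> (1 : R))
  (w_bound : forall m, 0 <= w m <= 1).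

Lemma is_cvg_series_mixture : cvgn (series (fun m => p m * w m)).
Proof.
apply: (series_le_cvg (v_ := p)) => [m|//|m|]; last by apply/cvg_ex; exists 1.
- by case/andP: (w_bound m) => w0 _; exact: mulr_ge0.
- by case/andP: (w_bound m) => _ w1; exact: ler_piMr.
Qed.

Lemma rseries_mixture_bound : 0 <= rseries (fun m => p m * w m) <= 1.
Proof.
apply/andP; split.
  apply: rseries_ge0 is_cvg_series_mixture _ => m.
  by case/andP: (w_bound m) => w0 _; exact: mulr_ge0.
rewrite -(cvg_lim _ p_sum1) //; apply: lim_series_le is_cvg_series_mixture _ _.
  by apply/cvg_ex; exists 1.
by move=> m; case/andP: (w_bound m) => _ w1; exact: ler_piMr.
Qed.

End mixture.

Lemma nneseries_convolution (x y : nat -> R) :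
  (forall n, 0 <= x n) -> (forall n, 0 <= y n) ->
  cvgn (series x) -> cvgn (series y) ->
  (\sum_(t <oo) (\sum_(t1 < t.+1) x t1 * y (t - t1)%N)%:E =
   (rseries x * rseries y)%:E)%E.
Proof.
move=> x0 y0 cx cy.
have xy0 t1 t : (0 <= (x t1 * y t)%:E)%E by rewrite lee_fin mulr_ge0.
transitivity (\sum_(t <oo) \sum_(t1 <oo)
   (if (t1 <= t)%N then (x t1 * y (t - t1)%N)%:E else 0))%E.
  apply: eq_eseriesr => t _; rewrite -sumEFin.
  rewrite (@nneseries_split R _ 0 t.+1); last by move=> k _; case: ifP.
  rewrite add0n [X in (_ + X)%E]eseries0 ?adde0; last first.
    by move=> k tk _; rewrite leqNgt tk.
  by rewrite big_mkord; apply: eq_bigr => t1 _; rewrite -ltnS ltn_ord.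
rewrite nneseries_interchange; last by move=> t1 t; case: ifP.
rewrite mulrC EFinM (EFin_rseries _ cx) -nneseriesZl; last by move=> n _; rewrite lee_fin.
apply: eq_eseriesr => t1 _.
rewrite -eseries_mkcond -ereal_series -nneseries_addn //.
under eq_eseriesr do rewrite addnK EFinM.
rewrite nneseriesZl; last by move=> n _; rewrite lee_fin.
by rewrite (EFin_rseries _ cy) muleC.
Qed.

Lemma sum_convolution_le (x y : nat -> R) k :
  (forall n, 0 <= x n) -> (forall n, 0 <= y n) ->
  \sum_(t < k) \sum_(t1 < t.+1) x t1 * y (t - t1)%N <=
  (\sum_(t < k) x t) * (\sum_(t < k) y t).
Proof.
move=> x0 y0.
have -> : \sum_(t < k) \sum_(t1 < t.+1) x t1 * y (t - t1)%N =
    \sum_(t1 < k) x t1 * \sum_(t2 < k - t1) y t2.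
  elim: k => [|k IH]; first by rewrite !big_ord0.
  rewrite big_ord_recr /= IH big_ord_recr /= subnn.
  rewrite [in RHS]big_ord_recr /= subSnn big_ord1 addrA -big_split /=.
  congr (_ + _); apply: eq_bigr => i _.
  by rewrite subSn 1?ltnW // big_ord_recr mulrDr.
rewrite mulr_suml; apply: ler_sum => t1 _; apply: ler_wpM2l => //.
have k_split : k = (k - t1 + t1)%N by rewrite subnK // ltnW.
by rewrite [in X in _ <= X]k_split big_split_ord /= lerDl; exact: sumr_ge0.
Qed.

End real_series.
Arguments EFin_rseries {R u}.

Lemma cvg_mx_entries (T : puniformType) m n (u : nat -> 'M[T]_(m, n)) (L : 'M[T]_(m, n)) :
  (forall i j, (fun k => u k i j) @ \oo --> L i j) -> u @ \oo --> L.
Proof.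
move=> uL; apply/cvg_mx_entourageP => A entA.
have /filter_forall : forall ij : 'I_m * 'I_n,
    \forall k \near \oo, A (L ij.1 ij.2, u k ij.1 ij.2).
  by move=> [i j]; have /cvg_entourageP := uL i j; apply.
by apply: filterS => k Hk i j; rewrite inE; exact: (Hk (i, j)).
Qed.

Lemma mx_pow_le {R : numDomainType} {n} {A B : 'M[R]_n} :
  (forall i j, 0 <= A i j <= B i j) ->
  forall k i j, 0 <= (A ^+ k) i j <= (B ^+ k) i j.
Proof.
move=> AB; elim=> [|k IH] i j; first by rewrite !expr0 !mxE lexx andbT ler0n.
rewrite !exprS -!mulmxE !mxE sumr_ge0 /= => [|l _]; last first.
  by case/andP: (AB i l) => A0 _; case/andP: (IH l j) => Ak0 _; exact: mulr_ge0.
apply: ler_sum => l _; case/andP: (AB i l) => A0 AB'; case/andP: (IH l j) => Ak0 AkB.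
exact: ler_pM.
Qed.

Section extinction.
Variables (R : realType) (s : nat) (P : 'M[R]_s) (Rd : 'I_s -> nat -> R).
Hypotheses (P_ge0 : forall i j, 0 <= P i j)
  (P_stoch : forall i, \sum_(j < s) P i j = 1)
  (Rd_ge0 : forall j n, 0 <= Rd j n)
  (Rd_sum1 : forall j, series (Rd j) @ \oo --> (1 : R)).

Local Notation h := (haltT P Rd).
Local Notation H := (haltProb P Rd).
Local Notation E := (extMx P Rd).
Local Notation f := (fgen P Rd).

Lemma stoch_row_avg_bound (x : 'I_s -> R) i :
  (forall k, 0 <= x k <= 1) -> 0 <= \sum_(k < s) P i k * x k <= 1.
Proof.
move=> x01; rewrite sumr_ge0 /= => [|k _]; last first.
  by case/andP: (x01 k) => x0 _; exact: mulr_ge0.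
rewrite -(P_stoch i); apply: ler_sum => k _.
by case/andP: (x01 k) => _ x1; exact: ler_piMr.
Qed.

Lemma haltT_from0 t i j : h t 0 i j = ((t == 0%N) && (i == j))%:R.
Proof. by case: t. Qed.

Lemma haltT_SS t n i j :
  h t.+1 n.+1 i j = \sum_(k < s) P i k * rseries (fun m => Rd k m * h t (n + m) k j).
Proof. by []. Qed.

Lemma haltT_bound t n i j : 0 <= h t n i j <= 1.
Proof.
elim: t n i j => [|t IH] n i j; first by rewrite ler0n lern1 leq_b1.
case: n => [|n]; first by rewrite lexx ler01.
rewrite haltT_SS; apply: stoch_row_avg_bound => k.
by apply: rseries_mixture_bound => // m; exact: IH.
Qed.

Lemma haltT_ge0 t n i j : 0 <= h t n i j.
Proof. by case/andP: (haltT_bound t n i j). Qed.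

Lemma is_cvg_series_haltT_step t n k j :
  cvgn (series (fun m => Rd k m * h t (n + m) k j)).
Proof. by apply: is_cvg_series_mixture => // m; exact: haltT_bound. Qed.

Lemma haltT_mass_le1 T n i : \sum_(t < T) \sum_(j < s) h t n i j <= 1.
Proof.
elim: T n i => [|T IH] n i; first by rewrite big_ord0 ler01.
rewrite big_ord_recl (eq_bigr (fun t : 'I_T => \sum_(j < s) h t.+1 n i j)) => [|t _];
  last by rewrite lift0.
case: n => [|n].
  rewrite [X in _ + X]big1 ?addr0 => [|t _]; last by rewrite big1.
  rewrite (bigD1 i) //= eqxx big1 ?addr0 // => j /negbTE.
  by rewrite eq_sym => ->.
rewrite big1 ?add0r //.
have mass k : rseries (fun m => Rd k m * \sum_(t < T) \sum_(j < s) h t (n + m) k j) =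
    \sum_(t < T) \sum_(j < s) rseries (fun m => Rd k m * h t (n + m) k j).
  have -> : (fun m => Rd k m * \sum_(t < T) \sum_(j < s) h t (n + m) k j) =
      (fun m => \sum_(t < T) \sum_(j < s) Rd k m * h t (n + m) k j).
    by apply/funext => m; rewrite mulr_sumr; under eq_bigr do rewrite mulr_sumr.
  rewrite rseries_sum => [|t]; last first.
    by apply: is_cvg_series_sum => j; exact: is_cvg_series_haltT_step.
  by apply: eq_bigr => t _; rewrite rseries_sum // => j; exact: is_cvg_series_haltT_step.
under eq_bigr do under eq_bigr do rewrite haltT_SS.
under eq_bigr do rewrite exchange_big /=.
rewrite exchange_big /=.
have -> : \sum_(k < s) \sum_(t < T) \sum_(j < s)
      P i k * rseries (fun m => Rd k m * h t (n + m) k j) =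
    \sum_(k < s) P i k * rseries (fun m => Rd k m * \sum_(t < T) \sum_(j < s) h t (n + m) k j).
  apply: eq_bigr => k _; rewrite mass mulr_sumr.
  by apply: eq_bigr => t _; rewrite mulr_sumr.
apply: (proj2 (andP (stoch_row_avg_bound _ _ _))) => k.
apply: rseries_mixture_bound => // m; rewrite IH andbT.
by apply: sumr_ge0 => t _; apply: sumr_ge0 => j _; exact: haltT_ge0.
Qed.

Lemma haltT_partial_sum_bound T n i j : 0 <= \sum_(t < T) h t n i j <= 1.
Proof.
rewrite sumr_ge0 => [|t _]; last exact: haltT_ge0.
apply: le_trans (haltT_mass_le1 T n i); apply: ler_sum => t _.
by rewrite (bigD1 j) //= lerDl; apply: sumr_ge0 => l _; exact: haltT_ge0.
Qed.

Lemma haltT_add t a b i j :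
  h t (a + b) i j = \sum_(t1 < t.+1) \sum_(l < s) h t1 a i l * h (t - t1) b l j.
Proof.
have add0 t' i' j' :
    h t' (0 + b) i' j' = \sum_(t1 < t'.+1) \sum_(l < s) h t1 0 i' l * h (t' - t1) b l j'.
  rewrite big_ord_recl [X in _ + X]big1 ?addr0 => [|t1 _]; last first.
    by rewrite big1 // => l _; rewrite haltT_from0 mul0r.
  rewrite subn0 (bigD1 i') //= eqxx mul1r big1 ?addr0 // => l /negbTE.
  by rewrite eq_sym => ->; rewrite mul0r.
elim: t a i j => [|t IH] [|a] i j; try exact: add0.
  by rewrite big_ord1 big1 // => l _; rewrite mul0r.
have step k : rseries (fun m => Rd k m * h t (a + b + m) k j) =
    \sum_(t1 < t.+1) \sum_(l < s)
      h (t - t1) b l j * rseries (fun m => Rd k m * h t1 (a + m) k l).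
  have -> : (fun m => Rd k m * h t (a + b + m) k j) = (fun m =>
      \sum_(t1 < t.+1) \sum_(l < s) h (t - t1) b l j * (Rd k m * h t1 (a + m) k l)).
    apply/funext => m; rewrite addnAC IH mulr_sumr; apply: eq_bigr => t1 _.
    by rewrite mulr_sumr; apply: eq_bigr => l _; rewrite mulrA mulrC.
  have cvg t1 l :
      cvgn (series (fun m => h (t - t1) b l j * (Rd k m * h t1 (a + m) k l))).
    exact/is_cvg_seriesZ/is_cvg_series_haltT_step.
  rewrite rseries_sum => [|t1]; last exact: is_cvg_series_sum.
  apply: eq_bigr => t1 _; rewrite rseries_sum //.
  by apply: eq_bigr => l _; rewrite rseriesZl //; exact: is_cvg_series_haltT_step.
rewrite addSn haltT_SS big_ord_recl [X in _ = X + _]big1 ?add0r => [|l _]; last first.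
  by rewrite /= mul0r.
under eq_bigr do rewrite step mulr_sumr.
rewrite exchange_big; apply: eq_bigr => t1 _; rewrite lift0 subSS.
under eq_bigr do rewrite mulr_sumr.
rewrite exchange_big; apply: eq_bigr => l _.
by rewrite haltT_SS mulr_suml; apply: eq_bigr => k _; rewrite mulrCA mulrC.
Qed.

Lemma is_cvg_haltT_series n i j : cvgn (series (fun t => h t n i j)).
Proof.
apply: nondecreasing_is_cvgn.
  by apply: nondecreasing_series => t _ _; exact: haltT_ge0.
exists 1 => _ [T _ <-]; rewrite /series /= big_mkord.
by case/andP: (haltT_partial_sum_bound T n i j).
Qed.

Lemma haltProb_bound n i j : 0 <= H n i j <= 1.
Proof.
apply/andP; split.
  by apply: rseries_ge0 => [|t]; [exact: is_cvg_haltT_series|exact: haltT_ge0].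
apply: limr_le; first exact: is_cvg_haltT_series.
apply: nearW => T; rewrite /series /= big_mkord.
by case/andP: (haltT_partial_sum_bound T n i j).
Qed.

Lemma is_cvg_series_Rd_haltProb n k j :
  cvgn (series (fun m => Rd k m * H (n + m) k j)).
Proof. by apply: is_cvg_series_mixture => // m; exact: haltProb_bound. Qed.

Lemma haltProb0 i j : H 0 i j = (i == j)%:R.
Proof. exact: (@rseries_single _ (fun t => h t 0 i j)). Qed.

Lemma haltProbD a b i j : H (a + b) i j = \sum_(l < s) H a i l * H b l j.
Proof.
apply: EFin_inj; rewrite /haltProb (EFin_rseries (is_cvg_haltT_series _ _ _)).
under eq_eseriesr do rewrite haltT_add exchange_big -sumEFin.
rewrite nneseries_sum => [|l t _]; last first.
  by rewrite lee_fin; apply: sumr_ge0 => t1 _; rewrite mulr_ge0 ?haltT_ge0.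
rewrite -sumEFin; apply: eq_bigr => l _.
apply: nneseries_convolution; try exact: is_cvg_haltT_series.
  by move=> t; exact: haltT_ge0.
by move=> t; exact: haltT_ge0.
Qed.

Lemma extMx_pow n i j : (E ^+ n) i j = H n i j.
Proof.
elim: n i j => [|n IH] i j; first by rewrite expr0 mxE haltProb0.
rewrite exprS -mulmxE mxE -add1n haltProbD.
by apply: eq_bigr => l _; rewrite IH mxE.
Qed.

Lemma extMx_ge0 i j : 0 <= E i j.
Proof. by rewrite mxE; case/andP: (haltProb_bound 1 i j). Qed.

Lemma haltProb_first_step n i j :
  H n.+1 i j = \sum_(k < s) P i k * rseries (fun m => Rd k m * H (n + m) k j).
Proof.
have EFin_ge0 (x : R) : 0 <= x -> (0 <= x%:E)%E by rewrite lee_fin.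
have Rd_h_ge0 k m t n' j' : 0 <= Rd k m * h t n' k j' by rewrite mulr_ge0 ?haltT_ge0.
apply: EFin_inj; rewrite /haltProb (EFin_rseries (is_cvg_haltT_series _ _ _)).
rewrite -nneseries_shift // => [|t]; last exact/EFin_ge0/haltT_ge0.
under eq_eseriesr do rewrite haltT_SS -sumEFin.
rewrite nneseries_sum => [|k t _]; last first.
  apply/EFin_ge0/mulr_ge0 => //.
  by apply: rseries_ge0 (is_cvg_series_haltT_step _ _ _ _) _ => m; exact: Rd_h_ge0.
rewrite -sumEFin; apply: eq_bigr => k _.
under eq_eseriesr do rewrite EFinM (EFin_rseries (is_cvg_series_haltT_step _ _ _ _)).
rewrite nneseriesZl => [|t _]; last first.
  by apply: nneseries_ge0 => m _ _; exact/EFin_ge0/Rd_h_ge0.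
rewrite nneseries_interchange => [|t m]; last exact/EFin_ge0/Rd_h_ge0.
rewrite EFinM (EFin_rseries (is_cvg_series_Rd_haltProb _ _ _)); congr (_ * _)%E.
apply: eq_eseriesr => m _; under eq_eseriesr do rewrite EFinM.
rewrite nneseriesZl => [|t _]; last exact/EFin_ge0/haltT_ge0.
by rewrite EFinM (EFin_rseries (is_cvg_haltT_series _ _ _)).
Qed.

Section below_extinction.
Variable M : 'M[R]_s.
Hypothesis M_bound : forall i j, 0 <= M i j <= E i j.

Lemma mx_pow_bound n i j : 0 <= (M ^+ n) i j <= 1.
Proof.
have /andP[Mn0 MnE] := mx_pow_le M_bound n i j.
by rewrite Mn0 (le_trans MnE) // extMx_pow; case/andP: (haltProb_bound n i j).
Qed.

Lemma is_cvg_series_Rd_pow k j : cvgn (series (fun n => Rd k n * (M ^+ n) k j)).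
Proof. by apply: is_cvg_series_mixture => // n; exact: mx_pow_bound. Qed.

Lemma fgenE i j :
  f M i j = \sum_(k < s) P i k * rseries (fun n => Rd k n * (M ^+ n) k j).
Proof.
rewrite mxE; transitivity (rseries (fun n => \sum_(k < s) P i k * (Rd k n * (M ^+ n) k j))).
  congr rseries; apply/funext => n; rewrite mxE.
  by apply: eq_bigr => k _; rewrite mxE mulrA.
rewrite rseries_sum => [|k]; last exact/is_cvg_seriesZ/is_cvg_series_Rd_pow.
by apply: eq_bigr => k _; rewrite rseriesZl //; exact: is_cvg_series_Rd_pow.
Qed.

End below_extinction.

Lemma fgen_extMx : f E = E.
Proof.
have E_bound i j : 0 <= E i j <= E i j by rewrite lexx extMx_ge0.
apply/matrixP => i j; rewrite fgenE // [RHS]mxE haltProb_first_step.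
by under eq_bigr do under eq_fun do rewrite extMx_pow.
Qed.

Lemma fgen_le (A B : 'M[R]_s) : (forall i j, 0 <= A i j <= B i j) ->
  (forall i j, B i j <= E i j) -> forall i j, 0 <= f A i j <= f B i j.
Proof.
move=> AB BE.
have A_bound i j : 0 <= A i j <= E i j.
  by case/andP: (AB i j) => A0 AB'; rewrite A0 (le_trans AB').
have B_bound i j : 0 <= B i j <= E i j.
  by case/andP: (AB i j) => A0 AB'; rewrite BE (le_trans A0 AB').
move=> i j; rewrite !fgenE // sumr_ge0 /= => [|k _]; last first.
  rewrite mulr_ge0 // rseries_ge0 // => [|n]; first exact: is_cvg_series_Rd_pow.
  by rewrite mulr_ge0 //; case/andP: (mx_pow_bound _ A_bound n k j).
apply: ler_sum => k _; apply: ler_wpM2l => //.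
apply: lim_series_le; try exact: is_cvg_series_Rd_pow.
by move=> n; apply: ler_wpM2l => //; case/andP: (mx_pow_le AB n k j).
Qed.

Lemma iter_fgen_bound (M : 'M[R]_s) : (forall i j, 0 <= M i j <= E i j) ->
  forall k i j, 0 <= iter k f M i j <= E i j.
Proof.
move=> M_bound; elim=> [|k IH] //= i j.
by rewrite -fgen_extMx; apply: fgen_le => // i' j'; rewrite lexx.
Qed.

Definition extMx_by k : 'M[R]_s := \matrix_(i, j) \sum_(t < k) h t 1 i j.

Lemma extMx_by_bound k i j : 0 <= extMx_by k i j <= E i j.
Proof.
rewrite !mxE sumr_ge0 /= => [|t _]; last exact: haltT_ge0.
have -> : \sum_(t < k) h t 1 i j = series (fun t => h t 1 i j) k.
  by rewrite /series /= big_mkord.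
apply: nondecreasing_cvgn_le; last exact: is_cvg_haltT_series.
by apply: nondecreasing_series => t _ _; exact: haltT_ge0.
Qed.

Lemma haltT_partial_le_pow k m i j :
  \sum_(t < k) h t m i j <= (extMx_by k ^+ m) i j.
Proof.
elim: m i j => [|m IH] i j.
  rewrite expr0 mxE; case: k => [|k]; first by rewrite big_ord0 ler0n.
  by rewrite big_ord_recl big1 ?addr0 // => t _; rewrite lift0.
rewrite exprS -mulmxE mxE -[m.+1]add1n.
under eq_bigr do rewrite haltT_add exchange_big /=.
rewrite exchange_big /=; apply: ler_sum => l _.
apply: le_trans (sum_convolution_le R _ _ k (fun t => haltT_ge0 t 1 i l)
  (fun t => haltT_ge0 t m l j)) _.
apply: ler_pM; try by apply: sumr_ge0 => t _; exact: haltT_ge0.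
  by rewrite mxE.
exact: IH.
Qed.

Lemma extMx_by_S k i j : extMx_by k.+1 i j =
  \sum_(l < s) P i l * rseries (fun m => Rd l m * \sum_(t < k) h t m l j).
Proof.
rewrite mxE big_ord_recl (eq_bigr (fun t : 'I_k => h t.+1 1 i j)) => [|t _]; last first.
  by rewrite lift0.
rewrite [h _ _ _ _]/= add0r; under eq_bigr do rewrite haltT_SS.
rewrite exchange_big /=; apply: eq_bigr => l _; rewrite -big_distrr /=; congr (_ * _).
rewrite -rseries_sum => [|t]; last exact: is_cvg_series_haltT_step.
by congr rseries; apply/funext => m; rewrite mulr_sumr.
Qed.

Lemma extMx_by_S_le_fgen k i j : extMx_by k.+1 i j <= f (extMx_by k) i j.
Proof.
rewrite extMx_by_S fgenE; last exact: extMx_by_bound.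
apply: ler_sum => l _; apply: ler_wpM2l => //.
apply: lim_series_le; last by move=> m; apply: ler_wpM2l => //; exact: haltT_partial_le_pow.
  by apply: is_cvg_series_mixture => // m; exact: haltT_partial_sum_bound.
exact/is_cvg_series_Rd_pow/extMx_by_bound.
Qed.

Lemma extMx_by_le_iter (M : 'M[R]_s) : (forall i j, 0 <= M i j <= E i j) ->
  forall k i j, extMx_by k i j <= iter k f M i j.
Proof.
move=> M_bound; elim=> [|k IH] i j.
  by rewrite mxE big_ord0; case/andP: (M_bound i j).
apply: le_trans (extMx_by_S_le_fgen k i j) _.
have by_le_iter i' j' : 0 <= extMx_by k i' j' <= iter k f M i' j'.
  by rewrite IH andbT; case/andP: (extMx_by_bound k i' j').
have iter_le i' j' : iter k f M i' j' <= E i' j'.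
  by case/andP: (iter_fgen_bound M M_bound k i' j').
by case/andP: (fgen_le _ _ by_le_iter iter_le i j).
Qed.

Lemma iter_fgen_cvg (M : 'M[R]_s) : (forall i j, 0 <= M i j <= E i j) ->
  (fun k => iter k f M) @ \oo --> E.
Proof.
move=> M_bound; apply: cvg_mx_entries => i j.
apply: (squeeze_cvgr (f := fun k => extMx_by k i j) (h := fun=> E i j)).
- apply: nearW => k; rewrite extMx_by_le_iter //=.
  by case/andP: (iter_fgen_bound M M_bound k i j).
- have -> : (fun k => extMx_by k i j) = series (fun t => h t 1 i j).
    by apply/funext => k; rewrite mxE /series /= big_mkord.
  rewrite mxE; exact: is_cvg_haltT_series.
- exact: cvg_cst.
Qed.

End extinction.

Theorem theorem1p4 (R : realType) (s : nat) (P : 'M[R]_s) (Rd : 'I_s -> nat -> R)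
  (P_ge0 : forall i j, 0 <= P i j)
  (P_stoch : forall i, \sum_(j < s) P i j = 1)
  (P_irr : forall i j, exists k : nat, 0 < (P ^+ k) i j)
  (Rd_ge0 : forall j n, 0 <= Rd j n)
  (Rd_sum1 : forall j, series (Rd j) @ \oo --> (1 : R)) :
  let E := extMx P Rd in
  let f := fgen P Rd in
  [/\ (forall (n : nat) (i j : 'I_s), (1 <= n)%N -> (E ^+ n) i j = haltProb P Rd n i j),
      f E = E,
      (forall M : 'M[R]_s, (forall i j, 0 <= M i j <= E i j) ->
          (fun k => iter k f M) @ \oo --> E)
    & (fun k => iter k f (0 : 'M[R]_s)) @ \oo --> E].
Proof.
move=> E f; split.
- by move=> n i j _; exact: extMx_pow.
- exact: fgen_extMx.
- exact: iter_fgen_cvg.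
- by apply: iter_fgen_cvg => // i j; rewrite mxE lexx extMx_ge0.
Qed.
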